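(* Let $m\geq 3$, let $f$ be a positive smooth function of one real variable, and consider the Egorov space $(\mathbb{R}^m,g_f)$ with $g_f=f(x^m)\sum_{i=1}^{m-2}(dx^i)^2+2dx^{m-1}dx^m$. Let $\widehat{f}$ be a positive smooth function of one real variable and $\widehat{g}_{\widehat{f}}=\widehat{f}(x^m)\sum_{i=1}^{m-2}(dx^i)^2+2dx^{m-1}dx^m$. Then $\widehat{g}_{\widehat{f}}$ is harmonic with respect to $g_f$ if and only if $\widehat{f}'=f'$.
   Context: A pseudo-Riemannian metric $\widehat{h}$ on a manifold $N$ is harmonic with respect to a pseudo-Riemannian metric $h$ if the identity map $I:(N,h)\to(N,\widehat{h})$ is a harmonic map; in local coordinates, $h^{ij}(\widehat{\Gamma}^k_{ij}-\Gamma^k_{ij})=0$ for all $k$, where $\Gamma,\widehat{\Gamma}$ are the Christoffel symbols of $h,\widehat{h}$. *)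

From mathcomp Require Import all_boot all_order all_algebra.
From mathcomp Require Import all_classical all_reals all_analysis.
Set Implicit Arguments. Unset Strict Implicit. Unset Printing Implicit Defensive.
Import Order.TTheory GRing.Theory Num.Theory.
Import numFieldNormedType.Exports.
Local Open Scope ring_scope.

Section Defs.
Variable R : realType.

Definition smooth1 (f : R -> R) : Prop :=
  forall (n : nat) (t : R), derivable (derive1n n f) t 1.

Definition coord_metric (m : nat) := 'rV[R]_m -> 'M[R]_m.

(* the k-th coordinate x^{k+1} (0-based index k) of a point of R^m *)
Definition xcoord (m : nat) (x : 'rV[R]_m) (k : nat) : R :=
  \sum_(i < m | nat_of_ord i == k) x ord0 i.

Definition pderiv (m : nat) (F : 'rV[R]_m -> R) (l : 'I_m) (x : 'rV[R]_m) : R :=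
  derive F x (delta_mx ord0 l).

Definition christoffel (m : nat) (h : coord_metric m) (x : 'rV[R]_m)
  (k i j : 'I_m) : R :=
  2^-1 * \sum_(l < m) (invmx (h x)) k l *
    (pderiv (fun y => h y j l) i x + pderiv (fun y => h y i l) j x
     - pderiv (fun y => h y i j) l x).

(* hh is harmonic w.r.t. h: the identity (R^m,h) -> (R^m,hh) is harmonic, i.e.
   h^{ij} (hGamma^k_ij - Gamma^k_ij) = 0 for all k, at every point. *)
Definition harmonic_wrt (m : nat) (hh h : coord_metric m) : Prop :=
  forall (x : 'rV[R]_m) (k : 'I_m),
    \sum_(i < m) \sum_(j < m)
      (invmx (h x)) i j * (christoffel hh x k i j - christoffel h x k i j) = 0.

(* Egorov metric g_f = f(x^m) sum_{i=1}^{m-2} (dx^i)^2 + 2 dx^{m-1} dx^m,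
   with 0-based indices: i < m-2 diagonal entries f(x^m), and the
   entries (m-2,m-1), (m-1,m-2) equal to 1. *)
Definition egorov_metric (m : nat) (f : R -> R) : coord_metric m :=
  fun x => \matrix_(i < m, j < m)
    (if (i == j :> nat) && (i < m - 2)%N then f (xcoord x m.-1)
     else if ((i == (m - 2)%N :> nat) && (j == m.-1 :> nat))
          || ((i == m.-1 :> nat) && (j == (m - 2)%N :> nat)) then 1 else 0).

End Defs.

(* The Egorov matrix g_f(x) is a weighted permutation matrix: row i has its
   only nonzero entry in column s i, where the involution s swaps the last two
   indices, and the weights depend on x only through f(x^m).  Hence
   g_f^{-1} = g_{1/f}, the only nonconstant entries are the diagonal f(x^m),
   and the only Christoffel symbols paired with nonzero entries of g_f^{-1} are
   Gamma^{m-1}_{ii} = -f'(x^m)/2 for i <= m-2.  The tension of the identity is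
   therefore (m-2)(f' - fh')/(2f) in the direction d/dx^{m-1} and 0 otherwise.
   Smoothness is never used: only [derive1] of the profiles enters, whatever
   its junk values. *)

From mathcomp Require Import all_boot all_order all_algebra.
From mathcomp Require Import all_classical all_reals all_analysis.
From mathcomp Require Import zify ring.
Import Order.TTheory GRing.Theory Num.Theory.
Import numFieldNormedType.Exports.

Set Implicit Arguments.
Unset Strict Implicit.
Unset Printing Implicit Defensive.
Local Open Scope ring_scope.

Section Coordinates.
Variables (R : realType) (m : nat).

Lemma xcoord_ord (x : 'rV[R]_m) (k : 'I_m) : xcoord x k = x ord0 k.
Proof. by rewrite /xcoord (big_pred1 k) // => i /=; rewrite -(inj_eq val_inj). Qed.

Lemma pderiv_comp_coord (f : R -> R) (k l : 'I_m) (x : 'rV[R]_m) :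
  pderiv (fun y => f (y ord0 k)) l x = if l == k then derive1 f (x ord0 k) else 0.
Proof.
rewrite /pderiv /derive /derive1 /=; case: eqP => [->|/eqP lk].
  set F := (fun h : R => _).
  have -> // : F = fun h => h^-1 *: (f (h + x ord0 k) - f (x ord0 k)).
  by apply: funext => h; rewrite /F !mxE !eqxx mulr1.
set F := (fun h : R => _); have -> : F = fun _ => 0.
  by apply: funext => h; rewrite /F !mxE eqxx eq_sym (negbTE lk) mulr0 add0r subrr scaler0.
exact: lim_cst.
Qed.

Definition identity_tension (hh h : coord_metric R m) (x : 'rV[R]_m) (k : 'I_m) : R :=
  \sum_(i < m) \sum_(j < m)
    invmx (h x) i j * (christoffel hh x k i j - christoffel h x k i j).

Lemma harmonic_wrtE (hh h : coord_metric R m) :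
  harmonic_wrt hh h <-> forall x k, identity_tension hh h x k = 0.
Proof. by []. Qed.

End Coordinates.

Section Egorov.
Variables (R : realType) (n : nat).
Local Notation m := n.+3.

Definition penult : 'I_m := inord n.+1.

Lemma val_penult : nat_of_ord penult = n.+1.
Proof. by rewrite inordK. Qed.

Definition egorov_swap (i : 'I_m) : 'I_m :=
  if (i < n.+1)%N then i else if i == n.+1 :> nat then ord_max else penult.

Lemma val_egorov_swap (i : 'I_m) : nat_of_ord (egorov_swap i) =
  if (i < n.+1)%N then nat_of_ord i else if i == n.+1 :> nat then n.+2 else n.+1.
Proof. by rewrite /egorov_swap; do 2!case: ifP => //; rewrite val_penult. Qed.

Lemma egorov_swapK : involutive egorov_swap.
Proof.
move=> i; apply: val_inj; rewrite /= !val_egorov_swap.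
by have := ltn_ord i; do !case: ifP; lia.
Qed.

Lemma egorov_swap_lt (i : 'I_m) : (egorov_swap i < n.+1)%N = (i < n.+1)%N.
Proof. by rewrite val_egorov_swap; have := ltn_ord i; do !case: ifP => //; lia. Qed.

Lemma egorov_swap_id (i : 'I_m) : (i < n.+1)%N -> egorov_swap i = i.
Proof. by rewrite /egorov_swap => ->. Qed.

Lemma egorov_swap_eq_max (k : 'I_m) : (egorov_swap k == ord_max) = (k == penult).
Proof.
rewrite -!(inj_eq val_inj) /= val_egorov_swap val_penult.
by have := ltn_ord k; do !case: ifP => //; lia.
Qed.

Definition egorov_weight (a : R) (i : 'I_m) : R := if (i < n.+1)%N then a else 1.

Lemma egorov_weight_swap a i : egorov_weight a (egorov_swap i) = egorov_weight a i.
Proof. by rewrite /egorov_weight egorov_swap_lt. Qed.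

Definition egorov_mx (a : R) : 'M[R]_m := \matrix_(i < m, j < m)
  (if (i == j :> nat) && (i < n.+1)%N then a
   else if ((i == n.+1 :> nat) && (j == n.+2 :> nat))
        || ((i == n.+2 :> nat) && (j == n.+1 :> nat)) then 1 else 0).

Lemma egorov_metricE (f : R -> R) (x : 'rV[R]_m) :
  @egorov_metric R m f x = egorov_mx (f (x ord0 ord_max)).
Proof. by rewrite -(xcoord_ord x ord_max). Qed.

Lemma egorov_mxE a i j :
  egorov_mx a i j = if j == egorov_swap i then egorov_weight a i else 0.
Proof.
rewrite mxE -(inj_eq val_inj) /= val_egorov_swap /egorov_weight.
by have := ltn_ord i; have := ltn_ord j; do !case: ifP => //; lia.
Qed.

Lemma egorov_mx_row_sum a i (F : 'I_m -> R) :
  \sum_(l < m) egorov_mx a i l * F l = egorov_weight a i * F (egorov_swap i).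
Proof.
under eq_bigr => l _ do rewrite egorov_mxE (fun_if (fun c => c * F l)) mul0r.
by rewrite -big_mkcond big_pred1_eq.
Qed.

Lemma egorov_mxV a : a != 0 -> egorov_mx a *m egorov_mx a^-1 = 1%:M.
Proof.
move=> a0; apply/matrixP => i j; rewrite !mxE egorov_mx_row_sum egorov_mxE.
rewrite egorov_swapK egorov_weight_swap [j == i]eq_sym /egorov_weight.
by case: eqP => _; case: ifP; rewrite ?mulr0 ?mulr1 ?mulfV.
Qed.

Lemma invmx_egorov_mx a : a != 0 -> invmx (egorov_mx a) = egorov_mx a^-1.
Proof.
move=> a0; have aV := egorov_mxV a0; have [aU _] := mulmx1_unit aV.
by rewrite -[invmx _]mulmx1 -aV mulmxA mulVmx ?mul1mx.
Qed.

Lemma pderiv_egorov_metric (f : R -> R) (i j l : 'I_m) (x : 'rV[R]_m) :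
  pderiv (fun y => @egorov_metric R m f y i j) l x =
  if [&& i == j, (i < n.+1)%N & l == ord_max] then derive1 f (x ord0 ord_max)
  else 0.
Proof.
rewrite -(inj_eq val_inj) /= andbA.
case diag: ((i == j :> nat) && (i < n.+1)%N) => /=.
  rewrite -pderiv_comp_coord; congr pderiv; apply: funext => y.
  by rewrite egorov_metricE mxE diag.
have -> : (fun y => @egorov_metric R m f y i j) = fun=> egorov_mx 0 i j.
  by apply: funext => y; rewrite egorov_metricE !mxE diag.
exact: derive_cst.
Qed.

Lemma christoffel_egorov_swap (f : R -> R) (x : 'rV[R]_m) (k i : 'I_m) :
  f (x ord0 ord_max) != 0 ->
  christoffel (@egorov_metric R m f) x k i (egorov_swap i) =
  if (i < n.+1)%N && (k == penult) then - (derive1 f (x ord0 ord_max) / 2) else 0.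
Proof.
move=> f0; rewrite /christoffel egorov_metricE invmx_egorov_mx //.
rewrite egorov_mx_row_sum !pderiv_egorov_metric.
have [i_small | i_large] := ltnP i n.+1; last first.
  by rewrite egorov_swap_lt ltnNge i_large !andbF /= !addr0 subrr !mulr0.
have i_max : (i == ord_max) = false.
  by apply/negbTE; rewrite -(inj_eq val_inj) /= neq_ltn ltnS ltnW.
rewrite egorov_swap_id // eqxx i_small i_max egorov_swap_eq_max !andbF /= !add0r.
case: eqP => [->|_]; last by rewrite oppr0 !mulr0.
by rewrite /egorov_weight val_penult ltnn mul1r mulrN mulrC.
Qed.

Lemma egorov_identity_tension (f fh : R -> R) (x : 'rV[R]_m) (k : 'I_m) :
  f (x ord0 ord_max) != 0 -> fh (x ord0 ord_max) != 0 ->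
  identity_tension (@egorov_metric R m fh) (@egorov_metric R m f) x k =
  if k == penult then
    - (n.+1)%:R / (2 * f (x ord0 ord_max))
      * (derive1 fh (x ord0 ord_max) - derive1 f (x ord0 ord_max))
  else 0.
Proof.
move=> f0 fh0; rewrite /identity_tension egorov_metricE invmx_egorov_mx //.
under eq_bigr => i _ do rewrite egorov_mx_row_sum !christoffel_egorov_swap //.
case: eqP => [_|_]; last by rewrite big1 // => i _; rewrite !andbF subrr mulr0.
under eq_bigr => i _ do rewrite andbT.
set t := x ord0 ord_max.
set c := (f t)^-1 * (- (derive1 fh t / 2) - - (derive1 f t / 2)).
have summandE (i : 'I_m) : egorov_weight (f t)^-1 i *
    ((if (i < n.+1)%N then - (derive1 fh t / 2) else 0)
     - (if (i < n.+1)%N then - (derive1 f t / 2) else 0))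
    = if (i < n.+1)%N then c else 0.
  by rewrite /egorov_weight; case: ifP; rewrite ?subrr ?mulr0.
under eq_bigr => i _ do rewrite summandE.
rewrite -big_mkcond (big_ord_narrow (leqW (leqnSn n.+1))) /= sumr_const card_ord.
by rewrite /c -mulr_natl; field.
Qed.

End Egorov.

Theorem theorem4p1 (R : realType) (m : nat) (hm : (3 <= m)%N)
  (f fh : R -> R)
  (f_smooth : smooth1 f) (f_pos : forall t, 0 < f t)
  (fh_smooth : smooth1 fh) (fh_pos : forall t, 0 < fh t) :
  harmonic_wrt (@egorov_metric R m fh) (@egorov_metric R m f) <->
  (forall t : R, derive1 fh t = derive1 f t).
Proof.
case: m hm => [|[|[|n]]] // _; rewrite harmonic_wrtE.
have f0 t : f t != 0 by rewrite lt0r_neq0.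
have fh0 t : fh t != 0 by rewrite lt0r_neq0.
split => [harmonic t | same_derive x k].
  have : identity_tension (@egorov_metric R _ fh) (@egorov_metric R _ f)
      (const_mx t) (penult n) = 0 by exact: harmonic.
  rewrite egorov_identity_tension // eqxx mxE.
  have coef0 : - (n.+1)%:R / (2 * f t) != 0.
    by rewrite mulf_neq0 ?oppr_eq0 ?pnatr_eq0 // invr_neq0 // mulf_neq0 ?pnatr_eq0.
  by move/eqP; rewrite mulf_eq0 (negbTE coef0) subr_eq0 => /eqP.
by rewrite egorov_identity_tension // same_derive subrr mulr0 if_same.
Qed.
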